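(* Let $\mu\in[0,1]$ and $c\ge -H(L_1)$. At every point of the collision set $\{(z,w)\in\Sigma_{\mu,c}: z=0\}$ the tangential Hessian $THess$ of $K_{\mu,c}$ is positive definite.
   Context: Restricted three-body problem: $H(q,p)=\tfrac12|p|^2+q_1p_2-q_2p_1-\frac{1-\mu}{|q+(\mu,0)|}-\frac{\mu}{|q-(1-\mu,0)|}$, $H(L_1)$ its smallest critical value. Levi-Civita Hamiltonian on $\mathbb{R}^4$ with coordinates ordered $(z_1,z_2,w_1,w_2)$ (complex notation $z=z_1+iz_2$): $K_{\mu,c}=\tfrac12|w|^2+c|z|^2-\tfrac{1-\mu}{2}+2|z|^2(z_1w_2-z_2w_1)-\mu(z_1w_2+z_2w_1)-\frac{\mu|z|^2}{|2z^2-1|}$; $\Sigma_{\mu,c}$ is the compact component of $K_{\mu,c}^{-1}(0)$ containing $\{z=0\}$. With $\mathbf I=\begin{pmatrix}0&0&1&0\\0&0&0&1\\-1&0&0&0\\0&-1&0&0\end{pmatrix}$, $\mathbf J=\begin{pmatrix}0&1&0&0\\-1&0&0&0\\0&0&0&-1\\0&0&1&0\end{pmatrix}$, $\mathbf K=\begin{pmatrix}0&0&0&-1\\0&0&1&0\\0&-1&0&0\\1&0&0&0\end{pmatrix}$, let $v_1=\mathbf I\nabla K_{\mu,c}$, $v_2=\mathbf J\nabla K_{\mu,c}$, $v_3=\mathbf K\nabla K_{\mu,c}$ (a frame of $T\Sigma_{\mu,c}$). The tangential Hessian is the $3\times3$ matrix $THess_{ij}=v_i^T\,\mathrm{Hess}(K_{\mu,c})\,v_j$.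 *)

From HB Require Import structures.
From mathcomp Require Import all_boot all_order all_algebra.
From mathcomp Require Import all_classical all_reals all_analysis.
Set Implicit Arguments. Unset Strict Implicit. Unset Printing Implicit Defensive.
Import Order.TTheory GRing.Theory Num.Theory.
Import numFieldNormedType.Exports.
Local Open Scope classical_set_scope.
Local Open Scope ring_scope.

Section Defs.
Variable R : realType.

Definition co (x : 'cV[R]_4) (k : nat) : R := x (inord k) 0.

Definition e4 (k : 'I_4) : 'cV[R]_4 := delta_mx k 0.

Definition pd (f : 'cV[R]_4 -> R) (k : 'I_4) (x : 'cV[R]_4) : R := 'D_(e4 k) f x.

Definition grad (f : 'cV[R]_4 -> R) (x : 'cV[R]_4) : 'cV[R]_4 :=
  \col_k pd f k x.
Definition hess (f : 'cV[R]_4 -> R) (x : 'cV[R]_4) : 'M[R]_4 :=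
  \matrix_(i, j) pd (pd f j) i x.

Definition H3b (mu : R) (x : 'cV[R]_4) : R :=
  let q1 := co x 0 in let q2 := co x 1 in let p1 := co x 2 in let p2 := co x 3 in
  (p1 ^+ 2 + p2 ^+ 2) / 2 + (q1 * p2 - q2 * p1)
  - (1 - mu) / Num.sqrt ((q1 + mu) ^+ 2 + q2 ^+ 2)
  - mu / Num.sqrt ((q1 - (1 - mu)) ^+ 2 + q2 ^+ 2).

Definition H3b_dom (mu : R) : set 'cV[R]_4 :=
  [set x | (co x 0, co x 1) != (- mu, 0) /\ (co x 0, co x 1) != (1 - mu, 0)].

Definition H3b_crit (mu : R) : set 'cV[R]_4 :=
  [set x | H3b_dom mu x /\ differentiable (H3b mu) x /\ grad (H3b mu) x = 0].

(* H(L_1): the smallest critical value of H *)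
Definition HL1 (mu : R) : R := inf [set H3b mu x | x in H3b_crit mu].

(* Levi-Civita Hamiltonian, coordinates (z1,z2,w1,w2);
   |2 z^2 - 1| with z = z1 + i z2 written out as a complex modulus *)
Definition absz2 (x : 'cV[R]_4) : R := co x 0 ^+ 2 + co x 1 ^+ 2.
Definition mod2z2m1 (x : 'cV[R]_4) : R :=
  let z1 := co x 0 in let z2 := co x 1 in
  Num.sqrt ((2 * (z1 ^+ 2 - z2 ^+ 2) - 1) ^+ 2 + (4 * z1 * z2) ^+ 2).

Definition KLC (mu c : R) (x : 'cV[R]_4) : R :=
  let z1 := co x 0 in let z2 := co x 1 in let w1 := co x 2 in let w2 := co x 3 in
  (w1 ^+ 2 + w2 ^+ 2) / 2 + c * absz2 x - (1 - mu) / 2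
  + 2 * absz2 x * (z1 * w2 - z2 * w1)
  - mu * (z1 * w2 + z2 * w1)
  - mu * absz2 x / mod2z2m1 x.

Definition Klevel0 (mu c : R) : set 'cV[R]_4 :=
  [set x | mod2z2m1 x != 0 /\ KLC mu c x = 0].

Definition Sigma (mu c : R) : set 'cV[R]_4 :=
  [set x | exists2 y, (Klevel0 mu c y /\ co y 0 = 0 /\ co y 1 = 0)
                    & connected_component (Klevel0 mu c) y x].

Definition matI : 'M[R]_4 := \matrix_(i < 4, j < 4)
  (nth [::] [:: [:: 0; 0; 1; 0]; [:: 0; 0; 0; 1]; [:: -1; 0; 0; 0]; [:: 0; -1; 0; 0]] i)`_j.
Definition matJ : 'M[R]_4 := \matrix_(i < 4, j < 4)
  (nth [::] [:: [:: 0; 1; 0; 0]; [:: -1; 0; 0; 0]; [:: 0; 0; 0; -1]; [:: 0; 0; 1; 0]] i)`_j.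
Definition matK : 'M[R]_4 := \matrix_(i < 4, j < 4)
  (nth [::] [:: [:: 0; 0; 0; -1]; [:: 0; 0; 1; 0]; [:: 0; -1; 0; 0]; [:: 1; 0; 0; 0]] i)`_j.

Definition quatmat (k : 'I_3) : 'M[R]_4 :=
  if val k == 0%N then matI else if val k == 1%N then matJ else matK.

Definition vframe (mu c : R) (x : 'cV[R]_4) (k : 'I_3) : 'cV[R]_4 :=
  quatmat k *m grad (KLC mu c) x.
Definition THess (mu c : R) (x : 'cV[R]_4) : 'M[R]_3 :=
  \matrix_(i, j) ((vframe mu c x i)^T *m hess (KLC mu c) x *m vframe mu c x j) 0 0.

Definition posdef n (A : 'M[R]_n) : Prop :=
  forall u : 'cV[R]_n, u != 0 -> 0 < (u^T *m A *m u) 0 0.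

End Defs.

(* At a collision point (z = 0) the Hessian of K is the quadratic form
     |w|^2 + 2(c - mu)|z|^2 - 2 mu (z1 w2 + z2 w1)
   = (w2 - mu z1)^2 + (w1 - mu z2)^2 + (2(c - mu) - mu^2)|z|^2,
   positive definite on all of R^4 as soon as 2(c - mu) > mu^2.  This follows
   from c >= -H(L1) >= -H(L4) = (3 - mu + mu^2)/2 and mu < 1, where L4 is the
   equilateral Lagrange point.  The matrices I, J, K satisfy
   |(u1 I + u2 J + u3 K) g| = |u| |g|, so the frame v_i is injective as soon as
   grad K <> 0; at a collision point of Sigma, grad K has w-component w and
   K = 0 forces |w|^2 = 1 - mu > 0.  Hence THess = F^T Hess(K) F is positive
   definite. *)

From HB Require Import structures.
From mathcomp Require Import all_boot all_order all_algebra.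
From mathcomp Require Import all_classical all_reals all_analysis.
From mathcomp Require Import ring lra.
Import Order.TTheory GRing.Theory Num.Theory.
Import numFieldNormedType.Exports.
Set Implicit Arguments. Unset Strict Implicit. Unset Printing Implicit Defensive.
Local Open Scope classical_set_scope.
Local Open Scope ring_scope.

(* The library states these rules for pointwise operations on functions
   ([f + g], [f ^+ n], ...); restated on lambda terms, they apply directly to
   the unfolded formulas defining the Hamiltonians. *)
Section PointwiseDerivatives.
Variables (R : realType) (V : normedModType R).
Implicit Types (f g : V -> R) (x v : V).

Lemma derive_line f x v : 'D_v f x = 'D_1 (fun h : R => f (h *: v + x)) 0.
Proof.
rewrite /derive.
have -> : (fun h : R => h^-1 *: ((f \o shift x) (h *: v) - f x)) =
  (fun h : R => h^-1 *: (((fun k : R => f (k *: v + x)) \o shift 0) (h *: 1)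
     - f (0 *: v + x))).
  by apply/funext => h /=; rewrite addr0 scale0r add0r [_%:A]mulr1.
by [].
Qed.

Lemma is_derive_lineP f x v d :
  is_derive x v f d <-> is_derive (0 : R) 1 (fun h : R => f (h *: v + x)) d.
Proof.
split=> -[df <-]; apply: DeriveDef; rewrite ?derive_line //.
- exact: (derivable1P f x v).1.
- exact: (derivable1P f x v).2.
Qed.

Lemma is_derive_comp1 (g : R -> R) f x v dg df :
  is_derive (f x) 1 g dg -> is_derive x v f df ->
  is_derive x v (fun y => g (f y)) (dg * df).
Proof.
move=> Dg /is_derive_lineP Df; apply/is_derive_lineP.
apply: (@is_derive1_comp _ g (fun h : R => f (h *: v + x))) => //=.
by rewrite scale0r add0r.
Qed.

Lemma is_derive_add f g x v df dg : is_derive x v f df -> is_derive x v g dg ->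
  is_derive x v (fun y => f y + g y) (df + dg).
Proof. exact: is_deriveD. Qed.

Lemma is_derive_sub f g x v df dg : is_derive x v f df -> is_derive x v g dg ->
  is_derive x v (fun y => f y - g y) (df - dg).
Proof. exact: is_deriveB. Qed.

Lemma is_derive_opp f x v df : is_derive x v f df ->
  is_derive x v (fun y => - f y) (- df).
Proof. exact: is_deriveN. Qed.

Lemma is_derive_mul f g x v df dg : is_derive x v f df -> is_derive x v g dg ->
  is_derive x v (fun y => f y * g y) (f x * dg + g x * df).
Proof. exact: is_deriveM. Qed.

Lemma is_derive_exp f x v df n : is_derive x v f df ->
  is_derive x v (fun y => f y ^+ n) (n%:R * f x ^+ n.-1 * df).
Proof. by rewrite -exprfctE; apply: is_deriveX. Qed.

Lemma is_derive_inv f x v df : f x != 0 -> is_derive x v f df ->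
  is_derive x v (fun y => (f y)^-1) (- df / f x ^+ 2).
Proof.
move=> fx0 [Df <-]; apply: DeriveDef; first exact: derivableV.
by rewrite deriveV // [_ *: _]mulrC mulNr mulrN.
Qed.

Lemma is_derive_sqrt f x v df : 0 < f x -> is_derive x v f df ->
  is_derive x v (fun y => Num.sqrt (f y)) (df / (2 * Num.sqrt (f x))).
Proof.
move=> fx0 Df; rewrite mulrC.
exact: is_derive_comp1 (is_derive1_sqrt fx0) Df.
Qed.

Lemma differentiable_add f g x : differentiable f x -> differentiable g x ->
  differentiable (fun y => f y + g y) x.
Proof. exact: differentiableD. Qed.

Lemma differentiable_sub f g x : differentiable f x -> differentiable g x ->
  differentiable (fun y => f y - g y) x.
Proof. exact: differentiableB. Qed.

Lemma differentiable_opp f x : differentiable f x ->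
  differentiable (fun y => - f y) x.
Proof. exact: differentiableN. Qed.

Lemma differentiable_mul f g x : differentiable f x -> differentiable g x ->
  differentiable (fun y => f y * g y) x.
Proof. exact: differentiableM. Qed.

Lemma differentiable_exp f x n : differentiable f x ->
  differentiable (fun y => f y ^+ n) x.
Proof.
move=> Df; case: n => [|n]; first exact: differentiable_cst.
by rewrite -exprfctE; apply: differentiableX.
Qed.

Lemma differentiable_inv f x : f x != 0 -> differentiable f x ->
  differentiable (fun y => (f y)^-1) x.
Proof. by move=> fx0 Df; apply: differentiableV. Qed.

Lemma differentiable_sqrt f x : 0 < f x -> differentiable f x ->
  differentiable (fun y => Num.sqrt (f y)) x.
Proof.
move=> fx0 Df; apply: (differentiable_comp Df).
exact/derivable1_diffP/(@ex_derive _ _ _ _ _ _ _ (is_derive1_sqrt fx0)).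
Qed.

End PointwiseDerivatives.

Lemma is_derive_mxcoord (R : realType) m n (i : 'I_m) (j : 'I_n) (x v : 'M[R]_(m, n)) :
  is_derive x v (fun y => y i j) (v i j).
Proof.
have Dl : (fun h : R => h^-1 *: (((fun y : 'M[R]_(m, n) => y i j) \o shift x) (h *: v) - x i j))
    @ 0^' --> v i j.
  apply: cvg_near_cst; near=> h.
  have h0 : h != 0 by near: h; exact: nbhs_dnbhs_neq.
  by rewrite /= !mxE addrK [_ *: _]mulrA mulVf ?mul1r.
by apply: DeriveDef; [apply/cvg_ex; exists (v i j) | exact: cvg_lim Dl].
Unshelve. all: by end_near.
Qed.

Lemma is_derive_co (R : realType) (x v : 'cV[R]_4) k :
  is_derive x v (fun y => co y k) (co v k).
Proof. exact: is_derive_mxcoord. Qed.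

Lemma differentiable_co (R : realType) (x : 'cV[R]_4) k :
  differentiable (fun y => co y k) x.
Proof. exact: differentiable_coord. Qed.

Ltac derive_step := first
  [ apply: is_derive_cst | apply: is_derive_co | apply: is_derive_sub
  | apply: is_derive_add | apply: is_derive_opp | apply: is_derive_mul
  | apply: is_derive_exp ].

Ltac derive_rules := repeat derive_step.

Ltac differentiable_step := first
  [ apply: differentiable_cst | apply: differentiable_co
  | apply: differentiable_sub | apply: differentiable_add
  | apply: differentiable_opp | apply: differentiable_mul
  | apply: differentiable_exp ].

Ltac differentiable_rules := repeat differentiable_step.

Section QuadraticForms.
Variable R : realDomainType.

Lemma cV_sqnorm_gt0 n (u : 'cV[R]_n) : u != 0 -> 0 < (u^T *m u) 0 0.
Proof.
have sq_ge0 i : 0 <= u^T 0 i * u i 0 by rewrite mxE -expr2 sqr_ge0.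
move=> u0; rewrite mxE lt_def sumr_ge0 ?andbT //; apply: contra u0 => /eqP u2_0.
have {}u2_0 := psumr_eq0P (fun i _ => sq_ge0 i) u2_0.
apply/eqP/matrixP => i j; rewrite (ord1 j) [RHS]mxE.
by have /eqP := u2_0 i isT; rewrite mxE -expr2 sqrf_eq0 => /eqP.
Qed.

Lemma gram_mxE m n (A : 'M[R]_m) (v : 'I_n -> 'cV[R]_m) :
  \matrix_(i, j) ((v i)^T *m A *m v j) 0 0 =
  (\matrix_(k, i) v i k 0)^T *m A *m \matrix_(k, i) v i k 0.
Proof.
apply/matrixP => i j; rewrite !mxE; apply: eq_bigr => k _; rewrite !mxE.
by congr (_ * _); apply: eq_bigr => l _; rewrite !mxE.
Qed.
End QuadraticForms.

Lemma posdef_mulmx (R : realType) m n (A : 'M[R]_m) (F : 'M[R]_(m, n)) :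
  posdef A -> (forall u : 'cV_n, u != 0 -> F *m u != 0) -> posdef (F^T *m A *m F).
Proof. by move=> A_pd F_inj u /F_inj /A_pd; rewrite trmx_mul !mulmxA. Qed.

Section SmallSums.
Variable V : nmodType.

Lemma sum_ord3 (F : 'I_3 -> V) :
  \sum_(i < 3) F i = F (inord 0) + F (inord 1) + F (inord 2).
Proof.
rewrite !big_ord_recr big_ord0 /= add0r.
by congr (F _ + F _ + F _); apply: val_inj; rewrite /= inordK.
Qed.

Lemma sum_ord4 (F : 'I_4 -> V) :
  \sum_(i < 4) F i = F (inord 0) + F (inord 1) + F (inord 2) + F (inord 3).
Proof.
rewrite !big_ord_recr big_ord0 /= add0r.
by congr (F _ + F _ + F _ + F _); apply: val_inj; rewrite /= inordK.
Qed.
End SmallSums.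

Section QuaternionFrame.
Variable R : realType.

Definition qframe (g : 'cV[R]_4) : 'M[R]_(4, 3) := \matrix_(k, i) (quatmat R i *m g) k 0.

Lemma qframe_sqnorm g (u : 'cV[R]_3) :
  ((qframe g *m u)^T *m (qframe g *m u)) 0 0 = (u^T *m u) 0 0 * (g^T *m g) 0 0.
Proof. by rewrite !(mxE, sum_ord3, sum_ord4) /quatmat /= !inordK //= !mxE !inordK //=; ring. Qed.

Lemma qframe_inj g (u : 'cV[R]_3) : g != 0 -> u != 0 -> qframe g *m u != 0.
Proof.
move=> g0 u0; apply: contraTneq (mulr_gt0 (cV_sqnorm_gt0 u0) (cV_sqnorm_gt0 g0)).
by rewrite -qframe_sqnorm => ->; rewrite trmx0 mul0mx mxE ltxx.
Qed.

Lemma THess_qframe (mu c : R) x : THess mu c x =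
  (qframe (grad (KLC mu c) x))^T *m hess (KLC mu c) x *m qframe (grad (KLC mu c) x).
Proof. exact: gram_mxE. Qed.

End QuaternionFrame.

Lemma co_e4 (R : realType) (i k : nat) : (i < 4)%N -> (k < 4)%N ->
  co (e4 R (inord i)) k = (k == i)%:R.
Proof. by move=> i4 k4; rewrite /co /e4 mxE eqxx andbT -val_eqE /= !inordK. Qed.

Section LeviCivitaTerms.
Variable R : realType.
Local Notation V := 'cV[R]_4.
Implicit Types x y v : V.

Definition mod2z2m1_sqr y : R :=
  (2 * (co y 0 ^+ 2 - co y 1 ^+ 2) - 1) ^+ 2 + (4 * co y 0 * co y 1) ^+ 2.

Definition d_absz2 y v : R := 2 * co y 0 * co v 0 + 2 * co y 1 * co v 1.

Definition d_mod2z2m1_sqr y v : R :=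
  2 * (2 * (co y 0 ^+ 2 - co y 1 ^+ 2) - 1) * (4 * co y 0 * co v 0 - 4 * co y 1 * co v 1)
  + 2 * (4 * co y 0 * co y 1) * (4 * co v 0 * co y 1 + 4 * co y 0 * co v 1).

Lemma is_derive_mod2z2m1_sqr y v : is_derive y v mod2z2m1_sqr (d_mod2z2m1_sqr y v).
Proof. by apply: is_derive_eq; [derive_rules | rewrite /d_mod2z2m1_sqr; ring]. Qed.

Lemma is_derive_mod2z2m1 y v : 0 < mod2z2m1_sqr y ->
  is_derive y v (@mod2z2m1 R) (d_mod2z2m1_sqr y v / (2 * mod2z2m1 y)).
Proof. by move=> y_pos; apply: is_derive_sqrt y_pos (is_derive_mod2z2m1_sqr y v). Qed.

Lemma near_mod2z2m1_sqr_gt0 x : 0 < mod2z2m1_sqr x -> \forall y \near x, 0 < mod2z2m1_sqr y.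
Proof.
move=> x_pos; apply: (cvgr_gt _ (differentiable_continuous _) _ x_pos).
rewrite /mod2z2m1_sqr; differentiable_rules.
Qed.

Section Collision.
Variable x : V.
Hypotheses (z1_0 : co x 0 = 0) (z2_0 : co x 1 = 0).

Lemma absz2_collision : absz2 x = 0.
Proof. by rewrite /absz2 z1_0 z2_0; ring. Qed.

Lemma mod2z2m1_sqr_collision : mod2z2m1_sqr x = 1.
Proof. by rewrite /mod2z2m1_sqr z1_0 z2_0; ring. Qed.

Lemma mod2z2m1_collision : mod2z2m1 x = 1.
Proof. by rewrite -[mod2z2m1 x]/(Num.sqrt (mod2z2m1_sqr x)) mod2z2m1_sqr_collision sqrtr1. Qed.

End Collision.
End LeviCivitaTerms.

Section LeviCivitaHamiltonian.
Variables (R : realType) (mu c : R).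
Local Notation V := 'cV[R]_4.
Implicit Types x y u v : V.

Definition dKLC y v : R :=
  co y 2 * co v 2 + co y 3 * co v 3 + c * d_absz2 y v
  + 2 * d_absz2 y v * (co y 0 * co y 3 - co y 1 * co y 2)
  + 2 * absz2 y * (co v 0 * co y 3 + co y 0 * co v 3 - co v 1 * co y 2 - co y 1 * co v 2)
  - mu * (co v 0 * co y 3 + co y 0 * co v 3 + co v 1 * co y 2 + co y 1 * co v 2)
  - mu * (d_absz2 y v / mod2z2m1 y
          - absz2 y * d_mod2z2m1_sqr y v / (2 * mod2z2m1 y ^+ 3)).

Lemma is_derive_KLC y v : 0 < mod2z2m1_sqr y -> is_derive y v (KLC mu c) (dKLC y v).
Proof.
move=> y_pos; have m_neq0 : mod2z2m1 y != 0 by rewrite gt_eqF ?sqrtr_gt0.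
apply: is_derive_eq; rewrite /KLC.
  by repeat first [ derive_step
    | apply: is_derive_inv m_neq0 _ | exact: is_derive_mod2z2m1 y_pos ].
by rewrite /dKLC /d_absz2; field.
Qed.

Lemma pd_KLC y k : 0 < mod2z2m1_sqr y -> pd (KLC mu c) k y = dKLC y (e4 R k).
Proof. by move=> y_pos; apply/derive_val/is_derive_KLC. Qed.

Definition d2KLC_collision u v : R :=
  co u 2 * co v 2 + co u 3 * co v 3 + 2 * (c - mu) * (co u 0 * co v 0 + co u 1 * co v 1)
  - mu * (co u 0 * co v 3 + co v 0 * co u 3 + co u 1 * co v 2 + co v 1 * co u 2).

Definition hessKLC_collision : 'M[R]_4 :=
  \matrix_(i, j) d2KLC_collision (e4 R i) (e4 R j).

Lemma hessKLC_collision_form w :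
  (w^T *m hessKLC_collision *m w) 0 0 = d2KLC_collision w w.
Proof.
by rewrite !(mxE, sum_ord4) /d2KLC_collision !co_e4 //= /co; ring.
Qed.

Lemma posdef_hessKLC_collision :
  0 < 2 * (c - mu) - mu ^+ 2 -> posdef hessKLC_collision.
Proof.
move=> A_gt0 w /cV_sqnorm_gt0; rewrite hessKLC_collision_form !(mxE, sum_ord4) -!/(co w _).
have -> : d2KLC_collision w w = (co w 3 - mu * co w 0) ^+ 2 + (co w 2 - mu * co w 1) ^+ 2
    + (2 * (c - mu) - mu ^+ 2) * (co w 0 ^+ 2 + co w 1 ^+ 2).
  by rewrite /d2KLC_collision; ring.
move: A_gt0; set A := 2 * (c - mu) - mu ^+ 2 => A_gt0 w_gt0.
have [z0|z_neq0] := eqVneq (co w 0 ^+ 2 + co w 1 ^+ 2) 0.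
  move/eqP: z0; rewrite paddr_eq0 ?sqr_ge0 // !sqrf_eq0 => /andP[/eqP w0 /eqP w1].
  by rewrite w0 w1 in w_gt0 *; nra.
have := sqr_ge0 (co w 3 - mu * co w 0); have := sqr_ge0 (co w 2 - mu * co w 1).
have : 0 < co w 0 ^+ 2 + co w 1 ^+ 2 by rewrite lt0r z_neq0 addr_ge0 ?sqr_ge0.
nra.
Qed.

Section Collision.
Variable x : V.
Hypotheses (z1_0 : co x 0 = 0) (z2_0 : co x 1 = 0).

Lemma KLC_collision : KLC mu c x = (co x 2 ^+ 2 + co x 3 ^+ 2 - (1 - mu)) / 2.
Proof.
rewrite -[KLC mu c x]/(_ - mu * absz2 x / mod2z2m1 x).
by rewrite absz2_collision // mod2z2m1_collision // z1_0 z2_0; ring.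
Qed.

Lemma is_derive_dKLC_collision u v :
  is_derive x u (fun y => dKLC y v) (d2KLC_collision u v).
Proof.
have x_pos : 0 < mod2z2m1_sqr x by rewrite mod2z2m1_sqr_collision.
have m1 := mod2z2m1_collision z1_0 z2_0.
have m_neq0 : mod2z2m1 x != 0 by rewrite m1 oner_eq0.
have m3_neq0 : 2 * mod2z2m1 x ^+ 3 != 0 by rewrite m1 expr1n mulr1 pnatr_eq0.
apply: is_derive_eq; rewrite /dKLC /d_absz2 /d_mod2z2m1_sqr.
  by repeat first [ derive_step
    | (apply: is_derive_inv; [first [exact: m_neq0 | exact: m3_neq0] | ])
    | exact: is_derive_mod2z2m1 x_pos ].
by rewrite /d2KLC_collision m1 absz2_collision // z1_0 z2_0; field.
Qed.

Lemma hess_KLC_collision : hess (KLC mu c) x = hessKLC_collision.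
Proof.
have x_pos : 0 < mod2z2m1_sqr x by rewrite mod2z2m1_sqr_collision.
apply/matrixP => i j; rewrite !mxE; apply/derive_val.
apply: near_eq_is_derive (is_derive_dKLC_collision _ _).
by apply: filterS (near_mod2z2m1_sqr_gt0 x_pos) => y /pd_KLC ->.
Qed.

Lemma grad_KLC_collision_w :
  co (grad (KLC mu c) x) 2 = co x 2 /\ co (grad (KLC mu c) x) 3 = co x 3.
Proof.
have x_pos : 0 < mod2z2m1_sqr x by rewrite mod2z2m1_sqr_collision.
rewrite /co !mxE !pd_KLC // /dKLC absz2_collision // mod2z2m1_collision //.
by rewrite /d_absz2 /d_mod2z2m1_sqr -!/(co _ _) z1_0 z2_0 !co_e4 //=; split; ring.
Qed.

End Collision.
End LeviCivitaHamiltonian.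

Section CriticalPointBound.
Variable R : realFieldType.

Lemma cauchy_schwarz2 (a1 a2 b1 b2 r s : R) : 0 <= r -> 0 <= s ->
  r ^+ 2 = a1 ^+ 2 + a2 ^+ 2 -> s ^+ 2 = b1 ^+ 2 + b2 ^+ 2 -> a1 * b1 + a2 * b2 <= r * s.
Proof.
move=> r0 s0 er es; have rs0 := mulr_ge0 r0 s0.
have : (a1 * b1 + a2 * b2) ^+ 2 <= (r * s) ^+ 2.
  by rewrite exprMn er es; have := sqr_ge0 (a1 * b2 - a2 * b1); nra.
nra.
Qed.

Lemma dist_triangle_unit (X1 X2 Y r1 r2 : R) : 0 <= r1 -> 0 <= r2 ->
  r1 ^+ 2 = X1 ^+ 2 + Y ^+ 2 -> r2 ^+ 2 = X2 ^+ 2 + Y ^+ 2 -> X1 - X2 = 1 ->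
  [/\ 1 <= r1 + r2, r2 <= r1 + 1 & r1 <= r2 + 1].
Proof.
move=> r1_ge0 r2_ge0 e1 e2 dX.
have cs := cauchy_schwarz2 r1_ge0 r2_ge0 e1 e2.
have cs' : X1 * - X2 + Y * - Y <= r1 * r2.
  by apply: cauchy_schwarz2 r1_ge0 r2_ge0 e1 _; rewrite !sqrrN.
have sq1 : (X1 - X2) ^+ 2 = 1 by rewrite dX expr1n.
have : 1 <= (r1 + r2) ^+ 2 by nra.
have : (r2 - r1) ^+ 2 <= 1 by nra.
by split; nra.
Qed.

Lemma norm_comb_le (al be X1 X2 Y r1 r2 : R) : 0 <= al -> 0 <= be ->
  0 <= r1 -> 0 <= r2 -> r1 ^+ 2 = X1 ^+ 2 + Y ^+ 2 -> r2 ^+ 2 = X2 ^+ 2 + Y ^+ 2 ->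
  (al * X1 + be * X2) ^+ 2 + (al * Y + be * Y) ^+ 2 <= (al * r1 + be * r2) ^+ 2.
Proof.
move=> al_ge0 be_ge0 r1_ge0 r2_ge0 e1 e2.
have : 0 <= r1 * r2 - (X1 * X2 + Y * Y) by rewrite subr_ge0 cauchy_schwarz2.
move/(mulr_ge0 (mulr_ge0 al_ge0 be_ge0)); nra.
Qed.

Lemma force_balance (a1 a2 m1 m2 X1 X2 Y r1 r2 : R) :
  r1 ^+ 2 = X1 ^+ 2 + Y ^+ 2 -> r2 ^+ 2 = X2 ^+ 2 + Y ^+ 2 ->
  a1 * X1 + a2 * X2 = m1 * X1 + m2 * X2 -> a1 * Y + a2 * Y = m1 * Y + m2 * Y ->
  ((a1 - m1) * r1) ^+ 2 = ((a2 - m2) * r2) ^+ 2.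
Proof.
move=> e1 e2 eqX eqY.
have balX : (a1 - m1) * X1 = - ((a2 - m2) * X2).
  by apply/eqP; rewrite -subr_eq0 opprK !mulrBl addrACA eqX -opprD subrr.
have balY : (a1 - m1) * Y = - ((a2 - m2) * Y).
  by apply/eqP; rewrite -subr_eq0 opprK !mulrBl addrACA eqY -opprD subrr.
by rewrite !exprMn e1 e2 !mulrDr -!exprMn balX balY !sqrrN.
Qed.

Lemma invr_le2 (r : R) : 1 / 2 <= r -> r^-1 <= 2.
Proof. by move=> r_ge; rewrite -[r^-1]mul1r ler_pdivrMr; lra. Qed.

(* At a critical point the net pulls m_i / r_i^2 - m_i r_i of the two primaries
   have equal size, while the distances r_i to the primaries, which are one
   unit apart, obey the triangle inequality. *)
Lemma mass_balance_bound (m1 m2 r1 r2 : R) : 0 <= m1 <= 1 -> 0 <= m2 <= 1 ->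
  0 < r1 -> 0 < r2 -> 1 <= r1 + r2 -> r2 <= r1 + 1 ->
  (m1 / r1 ^+ 2 - m1 * r1) ^+ 2 = (m2 / r2 ^+ 2 - m2 * r2) ^+ 2 -> m1 / r1 ^+ 2 <= 6.
Proof.
move=> /andP[m1_ge0 m1_le1] /andP[m2_ge0 m2_le1] r1_gt0 r2_gt0 r12_ge1 r2_le balance.
have a_gt0 : 0 < r1^-1 by rewrite invr_gt0.
have b_gt0 : 0 < r2^-1 by rewrite invr_gt0.
have ar : r1^-1 * r1 = 1 by rewrite mulVf ?gt_eqF.
have br : r2^-1 * r2 = 1 by rewrite mulVf ?gt_eqF.
rewrite -exprVn !(mulrC m1) !(mulrC m2) -exprVn in balance *.
move: a_gt0 b_gt0 ar br balance; set a := r1^-1; set b := r2^-1 => a_gt0 b_gt0 ar br balance.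
have [r1_ge|r1_lt] := leP (1 / 2) r1.
  have a_le2 : a <= 2 := invr_le2 r1_ge.
  have : a ^+ 2 <= 4 by nra.
  nra.
have b_le2 : b <= 2 by apply: invr_le2; lra.
have b2 : 0 <= b ^+ 2 * m2 <= 4 by apply/andP; split; nra.
have r2m2 : 0 <= r2 * m2 <= 3 / 2 by apply/andP; split; nra.
have : (a ^+ 2 * m1 - r1 * m1) ^+ 2 <= 4 ^+ 2 by rewrite balance; nra.
set x := a ^+ 2 * m1 - r1 * m1 => x_sqr.
have : x <= 4 by nra.
rewrite /x; nra.
Qed.

Lemma div_le_of_div_sqr_le (m r K : R) : 0 <= m <= 1 -> 1 <= K -> 0 < r ->
  m / r ^+ 2 <= K -> m / r <= K.
Proof.
move=> /andP[m_ge0 m_le1] K_ge1 r_gt0; rewrite -exprVn.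
have : 0 < r^-1 by rewrite invr_gt0.
have : r^-1 * r = 1 by rewrite mulVf ?gt_eqF.
set a := r^-1 => ar a_gt0 mrK.
have [r_le1|r_gt1] := leP r 1; last nra.
have a_ge1 : 1 <= a by nra.
have : 0 <= m * a * (a - 1) by rewrite mulr_ge0 ?mulr_ge0 ?subr_ge0 ?(ltW a_gt0).
nra.
Qed.

Lemma critical_potential_le (m q1 q2 r1 r2 : R) :
  0 <= m <= 1 -> 0 < r1 -> 0 < r2 ->
  r1 ^+ 2 = (q1 + m) ^+ 2 + q2 ^+ 2 -> r2 ^+ 2 = (q1 - (1 - m)) ^+ 2 + q2 ^+ 2 ->
  q1 = (1 - m) * (q1 + m) / r1 ^+ 3 + m * (q1 - (1 - m)) / r2 ^+ 3 ->
  q2 = (1 - m) * q2 / r1 ^+ 3 + m * q2 / r2 ^+ 3 ->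
  (q1 ^+ 2 + q2 ^+ 2) / 2 + (1 - m) / r1 + m / r2 <= 100.
Proof.
move=> /andP[m_ge0 m_le1] r1_gt0 r2_gt0 e1 e2 eq1 eq2.
have r1_neq0 : r1 != 0 by rewrite gt_eqF.
have r2_neq0 : r2 != 0 by rewrite gt_eqF.
set X1 := q1 + m in e1 eq1; set X2 := q1 - (1 - m) in e2 eq1.
set al := (1 - m) / r1 ^+ 3; set be := m / r2 ^+ 3.
have al_ge0 : 0 <= al by apply: divr_ge0; [lra | exact/exprn_ge0/ltW].
have be_ge0 : 0 <= be by apply: divr_ge0; [lra | exact/exprn_ge0/ltW].
have {}eq1 : q1 = al * X1 + be * X2 by rewrite [LHS]eq1 (mulrAC (1 - m)) (mulrAC m).
have {}eq2 : q2 = al * q2 + be * q2 by rewrite [LHS]eq2 (mulrAC (1 - m)) (mulrAC m).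
have alr1 : al * r1 = (1 - m) / r1 ^+ 2 by rewrite /al; field.
have ber2 : be * r2 = m / r2 ^+ 2 by rewrite /be; field.
have balance : ((1 - m) / r1 ^+ 2 - (1 - m) * r1) ^+ 2 = (m / r2 ^+ 2 - m * r2) ^+ 2.
  rewrite -alr1 -ber2 -!mulrBl; apply: force_balance e1 e2 _ _.
    by rewrite -eq1 /X1 /X2; ring.
  by rewrite -eq2; ring.
have dX : X1 - X2 = 1 by rewrite /X1 /X2; ring.
have [r12_ge1 r21_le r12_le] := dist_triangle_unit (ltW r1_gt0) (ltW r2_gt0) e1 e2 dX.
have m01 : 0 <= 1 - m <= 1 by apply/andP; split; lra.
have m01' : 0 <= m <= 1 by apply/andP.
have P_le := mass_balance_bound m01 m01' r1_gt0 r2_gt0 r12_ge1 r21_le balance.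
have Q_le : m / r2 ^+ 2 <= 6.
  by apply: mass_balance_bound m01' m01 r2_gt0 r1_gt0 _ r12_le (esym balance); lra.
have q_le : q1 ^+ 2 + q2 ^+ 2 <= (al * r1 + be * r2) ^+ 2.
  rewrite {1}eq1 {1}eq2.
  exact: norm_comb_le al_ge0 be_ge0 (ltW r1_gt0) (ltW r2_gt0) e1 e2.
rewrite alr1 ber2 in q_le.
have P_ge0 : 0 <= (1 - m) / r1 ^+ 2 by apply: divr_ge0; [lra | exact/exprn_ge0/ltW].
have Q_ge0 : 0 <= m / r2 ^+ 2 by apply: divr_ge0; [lra | exact/exprn_ge0/ltW].
have A_le : (1 - m) / r1 <= 6 by apply: div_le_of_div_sqr_le m01 _ r1_gt0 P_le; lra.
have B_le : m / r2 <= 6 by apply: div_le_of_div_sqr_le m01' _ r2_gt0 Q_le; lra.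
have : ((1 - m) / r1 ^+ 2 + m / r2 ^+ 2) ^+ 2 <= 12 ^+ 2.
  by rewrite ler_sqr ?nnegrE ?addr_ge0 //; lra.
lra.
Qed.
End CriticalPointBound.

Section ThreeBody.
Variables (R : realType) (mu : R).
Local Notation V := 'cV[R]_4.
Implicit Types x y v : V.

Definition dist1_sqr y : R := (co y 0 + mu) ^+ 2 + co y 1 ^+ 2.
Definition dist2_sqr y : R := (co y 0 - (1 - mu)) ^+ 2 + co y 1 ^+ 2.
Definition dist1 y : R := Num.sqrt (dist1_sqr y).
Definition dist2 y : R := Num.sqrt (dist2_sqr y).

Definition dH3b y v : R :=
  co y 2 * co v 2 + co y 3 * co v 3
  + (co v 0 * co y 3 + co y 0 * co v 3 - co v 1 * co y 2 - co y 1 * co v 2)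
  + (1 - mu) * ((co y 0 + mu) * co v 0 + co y 1 * co v 1) / dist1 y ^+ 3
  + mu * ((co y 0 - (1 - mu)) * co v 0 + co y 1 * co v 1) / dist2 y ^+ 3.

Lemma is_derive_H3b y v : 0 < dist1_sqr y -> 0 < dist2_sqr y ->
  is_derive y v (H3b mu) (dH3b y v).
Proof.
move=> d1_pos d2_pos.
have d1_neq0 : dist1 y != 0 by rewrite gt_eqF ?sqrtr_gt0.
have d2_neq0 : dist2 y != 0 by rewrite gt_eqF ?sqrtr_gt0.
apply: is_derive_eq; rewrite /H3b.
  by repeat first [ derive_step
    | (apply: is_derive_inv; [first [exact: d1_neq0 | exact: d2_neq0] | ])
    | (apply: is_derive_sqrt; [first [exact: d1_pos | exact: d2_pos] | ]) ].
rewrite /dH3b -/(dist1_sqr y) -/(dist2_sqr y) -/(dist1 y) -/(dist2 y).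
by field; rewrite d1_neq0 d2_neq0.
Qed.

Lemma H3b_dom_dist_sqr_gt0 x : H3b_dom mu x -> 0 < dist1_sqr x /\ 0 < dist2_sqr x.
Proof.
have sqr2_gt0 (a b : R) : (a, b) != (0, 0) -> 0 < a ^+ 2 + b ^+ 2.
  rewrite xpair_eqE negb_and => ab_neq0.
  by rewrite lt_def paddr_eq0 ?sqr_ge0 // !sqrf_eq0 negb_and ab_neq0 addr_ge0 ?sqr_ge0.
case=> away1 away2; split; apply: sqr2_gt0.
- apply: contraNneq away1 => -[q1E ->].
  by rewrite xpair_eqE eqxx andbT -[co x 0](addrK mu) q1E sub0r.
- apply: contraNneq away2 => -[q1E ->].
  by rewrite xpair_eqE eqxx andbT -[co x 0](subrK (1 - mu)) q1E add0r.
Qed.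

Lemma H3b_crit_dH3b x : H3b_crit mu x ->
  forall k, (k < 4)%N -> dH3b x (e4 R (inord k)) = 0.
Proof.
case=> /H3b_dom_dist_sqr_gt0 [d1_pos d2_pos] [_ grad0] k k4.
have := congr1 (fun g : V => g (inord k) 0) grad0.
by rewrite !mxE => <-; apply/esym/derive_val/is_derive_H3b.
Qed.

(* Any lower bound will do: it only makes the infimum [HL1] meaningful. *)
Lemma H3b_crit_ge x : 0 <= mu <= 1 -> H3b_crit mu x -> -100 <= H3b mu x.
Proof.
move=> mu01 x_crit; have [d1_pos d2_pos] := H3b_dom_dist_sqr_gt0 x_crit.1.
have d1_gt0 : 0 < dist1 x by rewrite sqrtr_gt0.
have d2_gt0 : 0 < dist2 x by rewrite sqrtr_gt0.
have d1E : dist1 x ^+ 2 = dist1_sqr x by rewrite sqr_sqrtr ?ltW.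
have d2E : dist2 x ^+ 2 = dist2_sqr x by rewrite sqr_sqrtr ?ltW.
have crit_eq := H3b_crit_dH3b x_crit.
have := crit_eq 0%N erefl; have := crit_eq 1%N erefl.
have := crit_eq 2%N erefl; have := crit_eq 3%N erefl.
rewrite /dH3b !co_e4 //= => p2E p1E eq1 eq0.
have p2 : co x 3 = - co x 0 by lra.
have p1 : co x 2 = co x 1 by lra.
rewrite p1 p2 in eq0 eq1.
have q1E : co x 0 = (1 - mu) * (co x 0 + mu) / dist1 x ^+ 3
                    + mu * (co x 0 - (1 - mu)) / dist2 x ^+ 3 by lra.
have q2E : co x 1 = (1 - mu) * co x 1 / dist1 x ^+ 3 + mu * co x 1 / dist2 x ^+ 3 by lra.
have := critical_potential_le mu01 d1_gt0 d2_gt0 d1E d2E q1E q2E.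
have -> : H3b mu x = (co x 2 ^+ 2 + co x 3 ^+ 2) / 2 + (co x 0 * co x 3 - co x 1 * co x 2)
                     - (1 - mu) / dist1 x - mu / dist2 x by [].
rewrite p1 p2; lra.
Qed.

(* q at the apex of the equilateral triangle over the primaries, p = (q2, -q1). *)
Definition L4 : V :=
  \col_k nth 0 [:: 1 / 2 - mu; Num.sqrt 3 / 2; Num.sqrt 3 / 2; mu - 1 / 2] k.

Lemma co_L4 k : (k < 4)%N ->
  co L4 k = nth 0 [:: 1 / 2 - mu; Num.sqrt 3 / 2; Num.sqrt 3 / 2; mu - 1 / 2] k.
Proof. by move=> k4; rewrite /co mxE inordK. Qed.

Let sqrt3_sqr : Num.sqrt (3 : R) ^+ 2 = 3.
Proof. by rewrite sqr_sqrtr ?ler0n. Qed.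

Lemma dist1_sqr_L4 : dist1_sqr L4 = 1.
Proof. by rewrite /dist1_sqr !co_L4 //=; have := sqrt3_sqr; lra. Qed.

Lemma dist2_sqr_L4 : dist2_sqr L4 = 1.
Proof. by rewrite /dist2_sqr !co_L4 //=; have := sqrt3_sqr; lra. Qed.

Lemma L4_crit : H3b_crit mu L4.
Proof.
have d1_pos : 0 < dist1_sqr L4 by rewrite dist1_sqr_L4.
have d2_pos : 0 < dist2_sqr L4 by rewrite dist2_sqr_L4.
have dist1_L4 : dist1 L4 = 1 by rewrite /dist1 dist1_sqr_L4 sqrtr1.
have dist2_L4 : dist2 L4 = 1 by rewrite /dist2 dist2_sqr_L4 sqrtr1.
have d1_neq0 : dist1 L4 != 0 by rewrite dist1_L4 oner_eq0.
have d2_neq0 : dist2 L4 != 0 by rewrite dist2_L4 oner_eq0.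
split; [|split].
- have sqrt3_neq0 : Num.sqrt (3 : R) / 2 != 0 by rewrite mulf_neq0 ?invr_eq0 // sqrtr_eq0 -ltNge.
  by split; rewrite xpair_eqE negb_and !co_L4 //= sqrt3_neq0 orbT.
- rewrite /H3b; repeat first [ differentiable_step
    | (apply: differentiable_inv; [first [exact: d1_neq0 | exact: d2_neq0] | ])
    | (apply: differentiable_sqrt; [first [exact: d1_pos | exact: d2_pos] | ]) ].
- apply/matrixP => k j; rewrite !mxE.
  have -> : k = inord k by apply: val_inj; rewrite /= inordK.
  transitivity (dH3b L4 (e4 R (inord k))); first exact/derive_val/is_derive_H3b.
  rewrite /dH3b dist1_L4 dist2_L4 !co_L4 //.
  by case: k => [[|[|[|[|]]]] k4] //=; rewrite !co_e4 //=; have := sqrt3_sqr; lra.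
Qed.

Lemma H3b_L4 : H3b mu L4 = (mu - mu ^+ 2 - 3) / 2.
Proof.
rewrite -[H3b mu L4]/(_ - (1 - mu) / dist1 L4 - mu / dist2 L4).
by rewrite /dist1 /dist2 dist1_sqr_L4 dist2_sqr_L4 sqrtr1 !co_L4 //=; have := sqrt3_sqr; lra.
Qed.

Lemma HL1_le : 0 <= mu <= 1 -> HL1 mu <= (mu - mu ^+ 2 - 3) / 2.
Proof.
move=> mu01; rewrite -H3b_L4; apply: ge_inf; last by exists L4 => //; exact: L4_crit.
by exists (-100) => _ [x x_crit <-]; exact: H3b_crit_ge.
Qed.

End ThreeBody.

Theorem lemma4p3 (R : realType) (mu c : R) :
  0 <= mu -> mu < 1 -> - HL1 mu <= c ->
  forall x : 'cV[R]_4, Sigma mu c x -> co x 0 = 0 -> co x 1 = 0 ->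
  posdef (THess mu c x).
Proof.
move=> mu_ge0 mu_lt1 c_ge x [y _ /connected_component_sub [_ Kx0]] z1_0 z2_0.
have w_sqr : co x 2 ^+ 2 + co x 3 ^+ 2 = 1 - mu.
  by move: Kx0; rewrite KLC_collision //; lra.
have A_gt0 : 0 < 2 * (c - mu) - mu ^+ 2.
  have mu01 : 0 <= mu <= 1 by apply/andP; split; lra.
  by have := HL1_le mu01; lra.
have grad_neq0 : grad (KLC mu c) x != 0.
  apply/eqP => g0; have [] := grad_KLC_collision_w mu c z1_0 z2_0.
  by rewrite g0 => w1_0 w2_0; move: w_sqr; rewrite -w1_0 -w2_0 /co !mxE; lra.
rewrite THess_qframe hess_KLC_collision //.
exact: posdef_mulmx (posdef_hessKLC_collision A_gt0) (fun u => qframe_inj grad_neq0).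
Qed.
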